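(* Let $(P_n)_{n\ge0}$ be a sequence with $P_n\in\Lambda_n$ satisfying: $P_0$ is a unit of $\Lambda_0=\mathbf{Z}_p$; $\pi_{1/0}(P_1)=uP_0$ for some $u\in\mathbf{Z}_p^\times$; and $\pi_{n+1/n}(P_{n+1})=a\,P_n-\nu_{n-1/n}(P_{n-1})$ for all $n\ge1$, where $a\in p\mathbf{Z}_p$ is fixed. Then for all $n\ge0$, $P_n\neq 0$, $\mu(P_n)=0$ and $\lambda(P_n)=q_n$, where $q_0=q_1=0$ and for $n\ge2$ $$q_n=\begin{cases}p^{n-1}-p^{n-2}+\cdots+p-1 & n \text{ even},\\ p^{n-1}-p^{n-2}+\cdots+p^2-p & n \text{ odd}.\end{cases}$$
   Context: Let $p$ be an odd prime. For $n\ge0$ let $G_n$ be a cyclic group of order $p^n$ with surjections $G_n\to G_{n-1}$, $\Lambda_n=\mathbf{Z}_p[G_n]$, $\widetilde\Lambda_n=\mathbf{F}_p[G_n]$ and $\widetilde I_n$ the augmentation ideal of $\widetilde\Lambda_n$. For nonzero $f\in\Lambda_n$, $\mu(f)$ is the unique integer with $f\in p^{\mu(f)}\Lambda_n\setminus p^{\mu(f)+1}\Lambda_n$, and $\lambda(f)$ is the unique integer such that the reduction mod $p$ of $p^{-\mu(f)}f$ lies in $\widetilde I_n^{\lambda(f)}\setminus\widetilde I_n^{\lambda(f)+1}$. $\pi_{n/n-1}:\Lambda_n\to\Lambda_{n-1}$ is induced by $G_n\to G_{n-1}$, and $\nu_{n-1/n}:\Lambda_{n-1}\to\Lambda_n$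 is the $\mathbf{Z}_p$-linear map with $\nu_{n-1/n}(\sigma)=\sum_{\tau\in G_n,\ \tau\mapsto\sigma}\tau$ for $\sigma\in G_{n-1}$. (In the paper, $P_n=F_n(c_n)$ is the image of Kobayashi's point $c_n$ and $a=a_p$; only the stated properties are used.) *)

From HB Require Import structures.
From mathcomp Require Import boolp.
From mathcomp Require Import all_boot all_order all_algebra.
Set Implicit Arguments. Unset Strict Implicit. Unset Printing Implicit Defensive.
Import Order.TTheory GRing.Theory Num.Theory.
Local Open Scope ring_scope.

(* The p-adic integers Z_p, as the inverse limit of the rings Z/p^k Z:        *)
(* an element is a coherent sequence (x_k)_k of residues x_k \in [0, p^k)     *)
(* with x_k = x_{k+1} mod p^k.  As for 'Z_p in mathcomp, the modulus used is  *)
(* maxn p 2 (so that the construction is a nontrivial ring for every p); for  *)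
(* a prime p this is p itself.                                               *)

Definition zpm (p : nat) : nat := maxn p 2.

Definition zp_coh (p : nat) (x : nat -> int) : Prop :=
  forall k, x k = modz (x k.+1) (zpm p ^ k)%:Z.

Record Zpadic (p : nat) := ZpMk { zp_val :> nat -> int ; zp_cohP : zp_coh p zp_val }.
Arguments ZpMk {p}.

HB.instance Definition _ p := gen_eqMixin (Zpadic p).
HB.instance Definition _ p := gen_choiceMixin (Zpadic p).

Section ZpRing.
Variable p : nat.
Local Notation M k := ((zpm p ^ k)%:Z).

Lemma zpm_gt1 : (1 < zpm p)%N.
Proof. by rewrite /zpm leq_max leqnn orbT. Qed.

Lemma M_neq0 k : M k != 0.
Proof. rewrite eqz_nat expn_eq0 negb_and; have := zpm_gt1; by case: (zpm p). Qed.

Lemma modz_modS (x : int) k : modz (modz x (M k.+1)) (M k) = modz x (M k).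
Proof.
have E : M k.+1 = (zpm p)%:Z * M k by rewrite expnS PoszM.
by rewrite [in RHS](intdiv.divz_eq x (M k.+1)) E mulrA modzMDl.
Qed.

Lemma zp_ext (x y : Zpadic p) : (forall k, x k = y k) -> x = y.
Proof.
case: x y => [x hx] [y hy] /= e.
have exy : x = y by apply: functional_extensionality_dep.
subst y; congr ZpMk; exact: Prop_irrelevance.
Qed.

Program Definition zp_of (f : nat -> int)
  (hf : forall k, modz (f k.+1) (M k) = modz (f k) (M k)) : Zpadic p :=
  @ZpMk p (fun k => modz (f k) (M k)) _.
Next Obligation. by move=> k; rewrite modz_modS hf. Qed.

Definition zp_zero : Zpadic p := @zp_of (fun _ => 0) (fun _ => erefl).
Definition zp_one : Zpadic p := @zp_of (fun _ => 1) (fun _ => erefl).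

Lemma zp_valE (x : Zpadic p) k : x k = modz (x k) (M k).
Proof. by rewrite (zp_cohP x k) modz_mod. Qed.

Lemma zp_valS (x : Zpadic p) k : modz (x k.+1) (M k) = modz (x k) (M k).
Proof. by rewrite -zp_cohP -zp_valE. Qed.

Program Definition zp_add (x y : Zpadic p) : Zpadic p :=
  @zp_of (fun k => x k + y k) _.
Next Obligation. by rewrite -modzDm !zp_valS modzDm. Qed.

Program Definition zp_opp (x : Zpadic p) : Zpadic p := @zp_of (fun k => - x k) _.
Next Obligation. by rewrite -modzNm zp_valS modzNm. Qed.

Program Definition zp_mul (x y : Zpadic p) : Zpadic p :=
  @zp_of (fun k => x k * y k) _.
Next Obligation. by rewrite -modzMm !zp_valS modzMm. Qed.

Lemma zp_addA : associative zp_add.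
Proof. by move=> x y z; apply: zp_ext => k /=; rewrite modzDml modzDmr addrA. Qed.
Lemma zp_addC : commutative zp_add.
Proof. by move=> x y; apply: zp_ext => k /=; rewrite addrC. Qed.
Lemma zp_add0 : left_id zp_zero zp_add.
Proof. by move=> x; apply: zp_ext => k /=; rewrite mod0z add0r -zp_valE. Qed.
Lemma zp_addN : left_inverse zp_zero zp_opp zp_add.
Proof. by move=> x; apply: zp_ext => k /=; rewrite modzDml addNr. Qed.

HB.instance Definition _ := GRing.isZmodule.Build (Zpadic p) zp_addA zp_addC zp_add0 zp_addN.

Lemma zp_mulA : associative zp_mul.
Proof. by move=> x y z; apply: zp_ext => k /=; rewrite modzMml modzMmr mulrA. Qed.
Lemma zp_mulC : commutative zp_mul.
Proof. by move=> x y; apply: zp_ext => k /=; rewrite mulrC. Qed.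
Lemma zp_mul1 : left_id zp_one zp_mul.
Proof. by move=> x; apply: zp_ext => k /=; rewrite modzMml mul1r -zp_valE. Qed.
Lemma zp_mulDl : left_distributive zp_mul zp_add.
Proof.
by move=> x y z; apply: zp_ext => k /=; rewrite modzMml modzDm mulrDl.
Qed.
Lemma zp_one_neq0 : zp_one != zp_zero.
Proof.
apply/eqP => /(congr1 (fun x : Zpadic p => x 1%N)) /=.
rewrite mod0z expn1 modz_small; first by [].
by rewrite ltz_nat zpm_gt1.
Qed.

HB.instance Definition _ := GRing.Zmodule_isComNzRing.Build (Zpadic p)
  zp_mulA zp_mulC zp_mul1 zp_mulDl zp_one_neq0.

End ZpRing.

(* We fix compatible generators gamma_n of G_n (gamma_n |-> gamma_{n-1}), and *)
(* identify G_n with 'I_(p^n) via gamma_n^i <-> i; the surjection             *)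
(* G_n -> G_{n-1} is then i |-> i mod p^(n-1).  An element of a group ring    *)
(* R[G_n] is the finite function g |-> (coefficient of g).                    *)

Definition Lam (p n : nat) := {ffun 'I_(p ^ n) -> Zpadic p}.

Definition lscale (p n : nat) (c : Zpadic p) (f : Lam p n) : Lam p n :=
  [ffun i => c * f i].

Definition lpi (p n : nat) (f : Lam p n.+1) : Lam p n :=
  [ffun j : 'I_(p ^ n) => \sum_(i : 'I_(p ^ n.+1) | (i %% p ^ n)%N == j) f i].

(* nu_{n/n+1} : Lambda_n -> Lambda_{n+1}, Z_p-linear with
   nu(sigma) = sum of the tau in G_{n+1} mapping to sigma; i.e. the coefficient
   of tau in nu(g) is the coefficient in g of the image of tau. *)
Definition lnu (p n : nat) (g : Lam p n) : Lam p n.+1 :=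
  [ffun i : 'I_(p ^ n.+1) => \sum_(j : 'I_(p ^ n) | (i %% p ^ n)%N == j) g j].

Definition is_mu (p n : nat) (f : Lam p n) (m : nat) : Prop :=
  (exists g : Lam p n, f = lscale (p%:R ^+ m) g) /\
  ~ (exists g : Lam p n, f = lscale (p%:R ^+ m.+1) g).

Definition tLam (p n : nat) := {ffun 'I_(p ^ n) -> 'F_p}.

(* reduction mod p : Lambda_n -> tilde Lambda_n (coefficientwise, via the
   residue of a p-adic integer modulo p) *)
Definition lred (p n : nat) (f : Lam p n) : tLam p n :=
  [ffun i => ((f i : Zpadic p) 1%N)%:~R].

Definition tmul (p n : nat) (f g : tLam p n) : tLam p n :=
  [ffun i : 'I_(p ^ n) =>
     \sum_(j : 'I_(p ^ n)) \sum_(k : 'I_(p ^ n) | ((j + k) %% p ^ n)%N == i)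
        f j * g k].

Definition in_aug (p n : nat) (f : tLam p n) : Prop := \sum_i f i = 0.

Fixpoint in_augpow (p n : nat) (k : nat) (f : tLam p n) : Prop :=
  match k with
  | 0 => True
  | k'.+1 => exists (m : nat) (xs ys : 'I_m -> tLam p n),
      (forall i, in_aug (xs i) /\ in_augpow k' (ys i)) /\
      f = \sum_(i < m) tmul (xs i) (ys i)
  end.

Definition is_lambda (p n : nat) (f : Lam p n) (l : nat) : Prop :=
  exists (m : nat) (g : Lam p n),
    is_mu f m /\ f = lscale (p%:R ^+ m) g /\
    in_augpow l (lred g) /\ ~ in_augpow l.+1 (lred g).

Definition qn (p n : nat) : int :=
  if (n < 2)%N then 0
  else if ~~ odd n then \sum_(0 <= i < n) (-1) ^+ (n.-1 - i) * (p ^ i)%:Z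
  else \sum_(1 <= i < n) (-1) ^+ (n.-1 - i) * (p ^ i)%:Z.

From HB Require Import structures.
From mathcomp Require Import boolp.
From mathcomp Require Import all_boot all_order all_algebra.
From mathcomp Require Import zify ring.
Set Implicit Arguments. Unset Strict Implicit. Unset Printing Implicit Defensive.
Import Order.TTheory GRing.Theory Num.Theory.
Local Open Scope ring_scope.

(* The substitution gamma |-> 1 + X identifies F_p[G_n] with F_p[X]/(X^(p^n)),
   because (1 + X)^(p^n) = 1 + X^(p^n) in characteristic p; the augmentation
   ideal becomes (X). So if the reduction mod p of f has nonzero image, then
   mu(f) = 0 and lambda(f) is the X-adic valuation of that image (as long as it
   is below p^n). Under this identification pi_{n+1/n} is reduction modulo
   X^(p^n), and nu_{n/n+1} is multiplication by
   1 + (1 + X^(p^n)) + ... + (1 + X^(p^n))^(p-1) = X^(p^(n+1) - p^n).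
   Since p divides a, the recursion becomes
   P_{n+2} = - X^(p^(n+1) - p^n) P_n  modulo (p, X^(p^(n+1))),
   so the valuation grows by p^(n+1) - p^n every two steps, from 0 at n = 0, 1:
   this is the recursion q_{n+2} = q_n + p^(n+1) - p^n. *)

Section TruncatedCongruence.
Variable R : nzRingType.

Definition eqmodX (N : nat) (a b : {poly R}) := forall j, (j < N)%N -> a`_j = b`_j.

Lemma eqmodX_sym N a b : eqmodX N a b -> eqmodX N b a.
Proof. by move=> eq_ab j lt_jN; rewrite eq_ab. Qed.

Lemma eqmodX_trans N a b c : eqmodX N a b -> eqmodX N b c -> eqmodX N a c.
Proof. by move=> eq_ab eq_bc j lt_jN; rewrite eq_ab // eq_bc. Qed.

Lemma eqmodXM N a a' b b' :
  eqmodX N a a' -> eqmodX N b b' -> eqmodX N (a * b) (a' * b').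
Proof.
move=> eq_a eq_b j lt_jN; rewrite !coefM; apply: eq_bigr => i _.
rewrite eq_a ?eq_b //; apply: leq_ltn_trans lt_jN; first exact: leq_subr.
by rewrite -ltnS.
Qed.

Lemma eqmodXZ N c a a' : eqmodX N a a' -> eqmodX N (c *: a) (c *: a').
Proof. by move=> eq_a j lt_jN; rewrite !coefZ eq_a. Qed.

Lemma eqmodX_sum N (I : Type) (r : seq I) (P : pred I) (A B : I -> {poly R}) :
  (forall i, P i -> eqmodX N (A i) (B i)) ->
  eqmodX N (\sum_(i <- r | P i) A i) (\sum_(i <- r | P i) B i).
Proof.
by move=> eq_AB j lt_jN; rewrite !coef_sum; apply: eq_bigr => i Pi; apply: eq_AB.
Qed.

Lemma eqmodXX N a a' k : eqmodX N a a' -> eqmodX N (a ^+ k) (a' ^+ k).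
Proof. by move=> eq_a; elim: k => [|k IHk] //; rewrite !exprS; apply: eqmodXM. Qed.

Lemma eqmodX_expn_modn N a m :
  eqmodX N (a ^+ N) 1 -> eqmodX N (a ^+ m) (a ^+ (m %% N)).
Proof.
move=> aN1; rewrite {1}(divn_eq m N) exprD mulnC exprM -[X in eqmodX _ _ X]mul1r.
apply: eqmodXM => //; rewrite -(expr1n _ (m %/ N)); exact: eqmodXX.
Qed.

Lemma eqmodX_size N (a b : {poly R}) :
  (size a <= N)%N -> (size b <= N)%N -> eqmodX N a b -> a = b.
Proof.
move=> sza szb eq_ab; apply/polyP => j; have [/eq_ab //|le_Nj] := ltnP j N.
by rewrite !nth_default // (leq_trans _ le_Nj).
Qed.

End TruncatedCongruence.

Section VanishingOrder.
Variable R : nzRingType.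

Definition vanishing_order (g : {poly R}) (l : nat) :=
  (forall j, (j < l)%N -> g`_j = 0) /\ g`_l != 0.

Lemma vanishing_order_neq0 g l : vanishing_order g l -> g != 0.
Proof. by case=> _; apply: contraNneq => ->; rewrite coef0. Qed.

Lemma vanishing_orderN g l : vanishing_order g l -> vanishing_order (- g) l.
Proof.
by case=> low nz_l; split=> [j /low|]; rewrite coefN ?oppr_eq0 // => ->; rewrite oppr0.
Qed.

Lemma vanishing_orderMXn g l d :
  vanishing_order g l -> vanishing_order (g * 'X^d) (l + d).
Proof.
case=> low nz_l; split=> [j lt_j|]; rewrite coefMXn.
  by case: ltnP => // le_dj; apply: low; lia.
by rewrite ltnNge leq_addl addnK.
Qed.

Lemma eqmodX_vanishing_order N g h l : (l < N)%N ->
  eqmodX N g h -> vanishing_order h l -> vanishing_order g l.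
Proof.
move=> lt_lN eq_gh [low nz_l]; split=> [j lt_jl|]; last by rewrite eq_gh.
by rewrite eq_gh ?low // (ltn_trans lt_jl).
Qed.

End VanishingOrder.

Section GroupRingPolynomial.
Variable F : fieldType.

Lemma comp_polyXsubC_K (g : {poly F}) z : (g \Po ('X - z%:P)) \Po ('X + z%:P) = g.
Proof. by have := comp_polyXaddC_K g (- z); rewrite polyCN opprK. Qed.

Definition gpoly (N : nat) (f : {ffun 'I_N -> F}) : {poly F} :=
  \sum_(i < N) f i *: ('X + 1) ^+ i.

Lemma gpoly_is_zmod_morphism N : zmod_morphism (@gpoly N).
Proof.
move=> f g; rewrite /gpoly -sumrB; apply: eq_bigr => i _.
by rewrite !ffunE scalerBl.
Qed.

HB.instance Definition _ N := GRing.isZmodMorphism.Build {ffun 'I_N -> F} {poly F}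
  (@gpoly N) (@gpoly_is_zmod_morphism N).

Lemma gpolyZ N c (f : {ffun 'I_N -> F}) : gpoly [ffun i => c * f i] = c *: gpoly f.
Proof. by rewrite /gpoly scaler_sumr; apply: eq_bigr => i _; rewrite ffunE scalerA. Qed.

Lemma gpoly_coef0 N (f : {ffun 'I_N -> F}) : (gpoly f)`_0 = \sum_i f i.
Proof.
rewrite coef_sum; apply: eq_bigr => i _.
by rewrite coefZ -horner_coef0 horner_exp hornerD hornerX hornerC add0r expr1n mulr1.
Qed.

Lemma coef_sum_scaleXn N (f : {ffun 'I_N -> F}) (k : 'I_N) :
  (\sum_(i < N) f i *: 'X^i)`_k = f k.
Proof.
rewrite coef_sum (bigD1 k) //= coefZ coefXn eqxx mulr1 big1 ?addr0 // => i ne_ik.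
by rewrite coefZ coefXn eq_sym val_eqE (negbTE ne_ik) mulr0.
Qed.

Lemma size_sum_scaleXn N (f : {ffun 'I_N -> F}) :
  (size (\sum_(i < N) f i *: 'X^i)%R <= N)%N.
Proof.
apply: (leq_trans (size_sum _ _ _)); apply/bigmax_leqP => i _.
by apply: (leq_trans (size_scale_leq _ _)); rewrite size_polyXn.
Qed.

Lemma gpoly_comp N (f : {ffun 'I_N -> F}) :
  gpoly f = (\sum_(i < N) f i *: 'X^i) \Po ('X + 1).
Proof.
by rewrite /gpoly raddf_sum; apply: eq_bigr => i _ /=; rewrite comp_polyZ comp_Xn_poly.
Qed.

Lemma size_gpoly N (f : {ffun 'I_N -> F}) : (size (gpoly f) <= N)%N.
Proof. by rewrite gpoly_comp size_comp_poly2 -?polyC1 ?size_XaddC ?size_sum_scaleXn. Qed.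

Lemma gpoly_inj N : injective (@gpoly N).
Proof.
move=> f g /(congr1 (comp_poly ('X - 1%:P))); rewrite !gpoly_comp -polyC1.
rewrite !comp_polyXaddC_K => eq_fg; apply/ffunP => i.
by rewrite -!coef_sum_scaleXn eq_fg.
Qed.

Lemma gpoly_onto N (g : {poly F}) :
  (size g <= N)%N -> exists f : {ffun 'I_N -> F}, gpoly f = g.
Proof.
move=> szg; pose f := [ffun i : 'I_N => (g \Po ('X - 1%:P))`_i]; exists f.
rewrite gpoly_comp; suff -> : \sum_(i < N) f i *: 'X^i = g \Po ('X - 1%:P).
  by rewrite -polyC1 comp_polyXsubC_K.
apply/polyP => j; have [lt_jN | le_Nj] := ltnP j N.
  by rewrite (coef_sum_scaleXn f (Ordinal lt_jN)) ffunE.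
rewrite !nth_default // (leq_trans _ le_Nj) ?size_sum_scaleXn //.
by rewrite size_comp_poly2 ?size_XsubC.
Qed.

End GroupRingPolynomial.

Section ModularGroupRing.
Variable p : nat.
Hypothesis p_prime : prime p.

Lemma expn_prime_gt0 n : (0 < p ^ n)%N.
Proof. by rewrite expn_gt0 prime_gt0. Qed.

Lemma expX1_pchar n : ('X + 1 : {poly 'F_p}) ^+ (p ^ n) = 'X^(p ^ n) + 1.
Proof.
by rewrite exprDn_pchar ?expr1n // pnatX (pnatE _ p_prime) pchar_poly (pchar_Fp p_prime).
Qed.

Lemma eqmodX_expX1_modn n m :
  eqmodX (p ^ n) (('X + 1 : {poly 'F_p}) ^+ m) (('X + 1) ^+ (m %% p ^ n)).
Proof.
apply: eqmodX_expn_modn => j lt_j; rewrite expX1_pchar coefD coefXn coef1.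
by rewrite (ltn_eqF lt_j) add0r.
Qed.

Lemma gpoly_tmul n (f g : tLam p n) :
  eqmodX (p ^ n) (gpoly (tmul f g)) (gpoly f * gpoly g).
Proof.
have -> : gpoly (tmul f g) = \sum_(j : 'I_(p ^ n)) \sum_(k : 'I_(p ^ n))
    (f j * g k) *: ('X + 1) ^+ ((j + k) %% p ^ n).
  rewrite /gpoly /tmul.
  under eq_bigr => i _ do rewrite ffunE scaler_suml.
  rewrite exchange_big /=; apply: eq_bigr => j _.
  under eq_bigr => i _ do rewrite scaler_suml.
  rewrite (exchange_big_dep xpredT) //=; apply: eq_bigr => k _.
  pose jk := Ordinal (ltn_pmod (j + k) (expn_prime_gt0 n)).
  by rewrite (eq_bigl (pred1 jk)) ?big_pred1_eq.
rewrite /gpoly mulr_suml; apply: eqmodX_sum => j _.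
rewrite mulr_sumr; apply: eqmodX_sum => k _.
rewrite -scalerAl -scalerAr scalerA -exprD.
by apply/eqmodXZ/eqmodX_sym/eqmodX_expX1_modn.
Qed.

Lemma in_augpow_coef n k (f : tLam p n) : in_augpow k f ->
  forall j, (j < k)%N -> (j < p ^ n)%N -> (gpoly f)`_j = 0.
Proof.
elim: k f => [|k IHk] f //= [m [xs [ys [in_xy ->]]]] j lt_jk lt_jpn.
rewrite raddf_sum coef_sum big1 // => i _; have [aug_x pow_y] := in_xy i.
rewrite (gpoly_tmul (xs i) (ys i) lt_jpn) coefM big1 // => t _.
have [-> | t_gt0] := posnP t; first by rewrite gpoly_coef0 aug_x mul0r.
rewrite (IHk _ pow_y) ?mulr0 //; first by have := ltn_ord t; lia.
by apply: leq_ltn_trans lt_jpn; apply: leq_subr.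
Qed.

Lemma coef_in_augpow n l (f : tLam p n) : (l < p ^ n)%N ->
  (forall j, (j < l)%N -> (gpoly f)`_j = 0) -> in_augpow l f.
Proof.
elim: l f => [|l IHl] f // lt_lpn coef_f /=.
have /factor_theorem [h] : root (gpoly f) 0 by rewrite /root horner_coef0 coef_f.
rewrite subr0 => gpoly_f.
have szh : (size h <= p ^ n)%N.
  apply: leq_trans (size_gpoly f); rewrite gpoly_f.
  by have [-> | nz_h] := eqVneq h 0; rewrite ?size_poly0 // size_mulX.
have [x gpoly_x] : exists x : tLam p n, gpoly x = 'X.
  by apply: gpoly_onto; rewrite size_polyX; lia.
have [y gpoly_y] := gpoly_onto szh.
exists 1%N, (fun=> x), (fun=> y); split; last first.
  rewrite big_ord1; apply/gpoly_inj/(@eqmodX_size _ (p ^ n)); rewrite ?size_gpoly //.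
  apply/eqmodX_sym/(eqmodX_trans (gpoly_tmul x y)) => j _.
  by rewrite gpoly_f gpoly_x gpoly_y mulrC.
move=> _; split; first by rewrite /in_aug -gpoly_coef0 gpoly_x coefX.
apply: IHl; first lia.
move=> j lt_jl; rewrite gpoly_y.
by have := coef_f j.+1 lt_jl; rewrite gpoly_f coefMX.
Qed.

End ModularGroupRing.

(* This holds for every p, so zp_red below is a ring morphism for every p and
   can be declared canonically. *)
Lemma zpm_Fp_0 (p : nat) : (zpm p)%:R = 0 :> 'F_p.
Proof.
apply: val_inj; rewrite /= Zp_nat /=; apply/eqP; rewrite -/(dvdn _ _).
have [p_gt1 | p_le1] := ltnP 1 p.
  rewrite Zp_cast ?pdiv_gt0 ?prime_gt1 ?pdiv_prime //.
  by rewrite /zpm (maxn_idPl p_gt1) pdiv_dvd.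
by rewrite /pdiv; case: p p_le1 => [|[|]].
Qed.

Section Reduction.
Variable p : nat.

Definition zp_red (x : Zpadic p) : 'F_p := (x 1%N)%:~R.

Lemma intr_modz_zpm (z : int) : (modz z (zpm p ^ 1)%:Z)%:~R = z%:~R :> 'F_p.
Proof. by rewrite /modz intrB intrM expn1 -pmulrn zpm_Fp_0 mulr0 subr0. Qed.

Lemma zp_red_is_zmod_morphism : zmod_morphism zp_red.
Proof.
by move=> x y; rewrite /zp_red /= intr_modz_zpm intrD [X in _ + X]intr_modz_zpm intrN.
Qed.

Lemma zp_red_is_monoid_morphism : monoid_morphism zp_red.
Proof.
split; first by rewrite /zp_red /= intr_modz_zpm.
by move=> x y; rewrite /zp_red /= intr_modz_zpm intrM.
Qed.

HB.instance Definition _ := GRing.isZmodMorphism.Build (Zpadic p) 'F_p zp_red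
  zp_red_is_zmod_morphism.
HB.instance Definition _ := GRing.isMonoidMorphism.Build (Zpadic p) 'F_p zp_red
  zp_red_is_monoid_morphism.

Lemma zp_red_unit (x v : Zpadic p) : x * v = 1 -> zp_red x != 0.
Proof.
move=> /(congr1 zp_red); rewrite rmorphM rmorph1 => xv1.
by apply/eqP => x0; move: xv1; rewrite /= x0 mul0r => /eqP; rewrite eq_sym oner_eq0.
Qed.

Lemma lredE n (f : Lam p n) i : lred f i = zp_red (f i).
Proof. by rewrite ffunE. Qed.

End Reduction.
Arguments zp_red {p}.

Section ReducedPolynomial.
Variable p : nat.
Hypothesis p_prime : prime p.

Lemma zp_red_p : zp_red (p%:R : Zpadic p) = 0.
Proof. by rewrite rmorph_nat pchar_Fp_0. Qed.


Definition lpoly n (f : Lam p n) : {poly 'F_p} := gpoly (lred f).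

Lemma lpolyZ n c (f : Lam p n) : lpoly (lscale c f) = zp_red c *: lpoly f.
Proof.
by rewrite /lpoly -gpolyZ; congr gpoly; apply/ffunP => i; rewrite lredE !ffunE rmorphM.
Qed.

Lemma lpolyB n (f g : Lam p n) : lpoly (f - g) = lpoly f - lpoly g.
Proof.
by rewrite /lpoly -raddfB; congr gpoly; apply/ffunP => i; rewrite lredE !ffunE rmorphB.
Qed.

Lemma lpoly0 n : lpoly (0 : Lam p n) = 0.
Proof. by rewrite -(subrr 0) lpolyB subrr. Qed.

Lemma lpoly_lpi n (f : Lam p n.+1) : eqmodX (p ^ n) (lpoly (lpi f)) (lpoly f).
Proof.
have -> : lpoly (lpi f) =
    \sum_(i : 'I_(p ^ n.+1)) zp_red (f i) *: ('X + 1) ^+ (i %% p ^ n).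
  rewrite /lpoly /gpoly.
  under eq_bigr => j _ do rewrite lredE ffunE rmorph_sum scaler_suml.
  rewrite (exchange_big_dep xpredT) //=; apply: eq_bigr => i _.
  pose i' := Ordinal (ltn_pmod i (expn_prime_gt0 p_prime n)).
  by rewrite (eq_bigl (pred1 i')) ?big_pred1_eq.
apply: eqmodX_sum => i _; rewrite lredE.
by apply/eqmodXZ/eqmodX_sym/eqmodX_expX1_modn.
Qed.

Lemma sum_expXn1 n :
  \sum_(t < p) ('X^(p ^ n) + 1 : {poly 'F_p}) ^+ t = 'X^(p ^ n.+1 - p ^ n).
Proof.
apply: (@mulfI _ ('X^(p ^ n))); first by rewrite monic_neq0 ?monicXn.
rewrite -[X in X * _](addrK 1) -subrX1 exprDn_pchar; last first.
  by rewrite (pnatE _ p_prime) pchar_poly (pchar_Fp p_prime).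
rewrite expr1n addrK -exprM -exprD subnKC; first by rewrite expnS mulnC.
by rewrite leq_pexp2l ?prime_gt0.
Qed.

Lemma lpoly_lnu n (g : Lam p n) : lpoly (lnu g) = lpoly g * 'X^(p ^ n.+1 - p ^ n).
Proof.
have pn_gt0 := expn_prime_gt0 p_prime n.
pose G i := zp_red (g (Ordinal (ltn_pmod i pn_gt0))) *: ('X + 1 : {poly 'F_p}) ^+ i.
have -> : lpoly (lnu g) = \sum_(0 <= i < p * p ^ n) G i.
  rewrite big_mkord /lpoly /gpoly -expnS; apply: eq_bigr => i _.
  by rewrite lredE ffunE (eq_bigl (pred1 (Ordinal (ltn_pmod i pn_gt0)))) ?big_pred1_eq.
rewrite big_nat_mul -sum_expXn1 big_mkord mulr_sumr; apply: eq_bigr => t _.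
rewrite -{1}(add0n (t * p ^ n)%N) big_addn mulSn addnK big_mkord mulr_suml.
apply: eq_bigr => j _; rewrite /G.
have -> : Ordinal (ltn_pmod (j + t * p ^ n)%N pn_gt0) = j.
  by apply: val_inj => /=; rewrite addnC modnMDl modn_small.
by rewrite lredE -scalerAl exprD mulnC exprM expX1_pchar.
Qed.

End ReducedPolynomial.


Section MuLambda.
Variable p : nat.
Hypothesis p_prime : prime p.

Lemma lscale1 n (f : Lam p n) : lscale 1 f = f.
Proof. by apply/ffunP => i; rewrite ffunE mul1r. Qed.

Lemma is_mu0 n (f : Lam p n) : lpoly f != 0 -> is_mu f 0.
Proof.
move=> nz_f; split; first by exists f; rewrite lscale1.
case=> g f_pg; move: nz_f; rewrite f_pg lpolyZ expr1 zp_red_p //.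
by rewrite scale0r eqxx.
Qed.

Lemma is_lambda_vanishing_order n (f : Lam p n) l :
  (l < p ^ n)%N -> vanishing_order (lpoly f) l -> is_lambda f l.
Proof.
move=> lt_lpn [low nz_l]; exists 0%N, f; split; last split.
- exact/is_mu0/(vanishing_order_neq0 (conj low nz_l)).
- by rewrite lscale1.
split; first exact: coef_in_augpow.
by move/(in_augpow_coef p_prime) => /(_ l (ltnSn l) lt_lpn) /eqP; apply/negP.
Qed.

End MuLambda.

Lemma alt_sum_step (p lo m : nat) : (lo <= m.+2)%N ->
  \sum_(lo <= i < m.+4) (-1) ^+ (m.+3 - i) * (p ^ i)%:Z =
  \sum_(lo <= i < m.+2) (-1) ^+ (m.+1 - i) * (p ^ i)%:Z + (p ^ m.+3)%:Z - (p ^ m.+2)%:Z.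
Proof.
move=> le_lo; rewrite big_nat_recr /=; last by lia.
rewrite big_nat_recr //= subnn expr0 mul1r (_ : m.+3 - m.+2 = 1)%N ?subSnn //.
rewrite expr1 mulN1r addrAC; congr (_ + _ - _); apply: eq_big_nat => i /andP [_ lt_i].
by rewrite (_ : m.+3 - i = (m.+1 - i).+2)%N ?exprSr ?expr1 -?mulrA ?mulN1r ?opprK //; lia.
Qed.

Lemma qn_rec p n : qn p n.+2 = qn p n + (p ^ n.+1)%:Z - (p ^ n)%:Z.
Proof.
case: n => [|[|m]].
- rewrite /qn /= big_nat_recr // big_nat_recr // big_geq // /= expn0 expn1; ring.
- rewrite /qn /= big_nat_recr // big_nat_recr // big_geq // /= expn1; ring.
- by rewrite /qn /=; case: (odd m); rewrite /= alt_sum_step.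
Qed.

Section Recursion.
Variables (p : nat) (a u : Zpadic p) (P : forall n : nat, Lam p n).
Hypotheses (p_prime : prime p)
  (a_in_pZp : exists b : Zpadic p, a = p%:R * b)
  (u_unit : exists v : Zpadic p, u * v = 1)
  (P0_unit : forall i : 'I_(p ^ 0), exists v : Zpadic p, P 0%N i * v = 1)
  (P1 : lpi (P 1%N) = lscale u (P 0%N))
  (Prec : forall n : nat, lpi (P n.+2) = lscale a (P n.+1) - lnu (P n)).

Definition lambda_spec n :=
  exists l : nat, [/\ l%:Z = qn p n, (l < p ^ n)%N & vanishing_order (lpoly (P n)) l].

Lemma lpoly_P0_coef0 : (lpoly (P 0%N))`_0 != 0.
Proof.
pose i0 : 'I_(p ^ 0) := Ordinal (expn_prime_gt0 p_prime 0).
rewrite gpoly_coef0 (big_pred1 i0) => [|i]; last first.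
  by apply/esym/eqP/val_inj; case: i => [[|i] //=]; rewrite expn0.
by have [v /zp_red_unit] := P0_unit i0; rewrite lredE.
Qed.

Lemma lpoly_rec n :
  eqmodX (p ^ n.+1) (lpoly (P n.+2)) (- (lpoly (P n) * 'X^(p ^ n.+1 - p ^ n))).
Proof.
have red_a : zp_red a = 0.
  by have [b ->] := a_in_pZp; rewrite rmorphM /= zp_red_p // mul0r.
apply: eqmodX_trans (eqmodX_sym (lpoly_lpi p_prime _)) _.
by rewrite Prec lpolyB lpolyZ red_a scale0r sub0r lpoly_lnu.
Qed.

Lemma lambda_spec0 : lambda_spec 0.
Proof.
by exists 0%N; split; rewrite ?expn_prime_gt0 //; split; last exact: lpoly_P0_coef0.
Qed.

Lemma lambda_spec1 : lambda_spec 1.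
Proof.
exists 0%N; split; rewrite ?expn_prime_gt0 //; split=> //.
rewrite -(lpoly_lpi p_prime (P 1%N) (expn_prime_gt0 p_prime 0)) P1 lpolyZ coefZ.
have [v /zp_red_unit nz_u] := u_unit.
by rewrite mulf_neq0 ?lpoly_P0_coef0.
Qed.

Lemma lambda_spec_rec n : lambda_spec n -> lambda_spec n.+2.
Proof.
case=> l [ql lt_lpn ord_l].
have lt_pn k : (p ^ k < p ^ k.+1)%N by rewrite ltn_exp2l ?prime_gt1.
have lt_lD : (l + (p ^ n.+1 - p ^ n) < p ^ n.+1)%N by have := lt_pn n; lia.
exists (l + (p ^ n.+1 - p ^ n))%N; split.
- by rewrite qn_rec -ql; have := lt_pn n; lia.
- exact: ltn_trans lt_lD (lt_pn _).
- apply: (eqmodX_vanishing_order lt_lD (lpoly_rec (n := n))).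
  exact/vanishing_orderN/vanishing_orderMXn.
Qed.

Lemma lambda_specP n : lambda_spec n.
Proof.
suff : lambda_spec n /\ lambda_spec n.+1 by case.
elim: n => [|n [IHn IHn1]]; first by split; [exact: lambda_spec0 | exact: lambda_spec1].
by split => //; apply: lambda_spec_rec.
Qed.

End Recursion.

(* The argument does not need p odd. *)
Theorem lemma5p1 (p : nat) (p_prime : prime p) (p_odd : odd p)
  (a u : Zpadic p) (P : forall n : nat, Lam p n)
  (a_in_pZp : exists b : Zpadic p, a = p%:R * b)
  (u_unit : exists v : Zpadic p, u * v = 1)
  (P0_unit : forall i : 'I_(p ^ 0), exists v : Zpadic p, P 0%N i * v = 1)
  (P1 : lpi (P 1%N) = lscale u (P 0%N))
  (Prec : forall n : nat,
     lpi (P n.+2) = lscale a (P n.+1) - lnu (P n)) :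
  forall n : nat,
    P n != 0 /\ is_mu (P n) 0 /\
    exists l : nat, l%:Z = qn p n /\ is_lambda (P n) l.
Proof.
move=> n.
have [l [ql lt_lpn ord_l]] := lambda_specP p_prime a_in_pZp u_unit P0_unit P1 Prec n.
have nz_lpoly := vanishing_order_neq0 ord_l.
split; first by apply: contraNneq nz_lpoly => ->; rewrite lpoly0.
split; first exact: is_mu0.
by exists l; split; last exact: is_lambda_vanishing_order.
Qed.
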